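(* Let $G$ be a connected graph with $n$ vertices and let $k$ be an integer. The following statements are equivalent: (1) there is a GS ordering of $G$ whose $\mathcal{F}$-tree has at least $k$ leaves; (2) there is a spanning tree of $G$ with at least $k$ leaves; (3) there is a connected dominating set of $G$ with at most $n-k$ vertices.
   Context: All graphs are finite, simple, undirected, connected and non-empty. A GS ordering of $G$ is an ordering $(v_1,\dots,v_n)$ of $V(G)$ such that every $v_i$ with $i>1$ has a neighbor among $v_1,\dots,v_{i-1}$. Its $\mathcal{F}$-tree is the spanning tree rooted at $v_1$ in which the parent of $v_i$ ($i>1$) is its leftmost neighbor in the ordering. Spanning trees are rooted; a leaf is a non-root vertex without children (the root is never a leaf). A connected dominating set is a set $D\subseteq V(G)$ with $G[D]$ connected and every vertex outside $D$ adjacent to a vertex of $D$. *)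

From mathcomp Require Import all_boot all_order all_algebra.
Set Implicit Arguments. Unset Strict Implicit. Unset Printing Implicit Defensive.

Definition simple_graph (T : finType) (e : rel T) : Prop :=
  symmetric e /\ irreflexive e.

Definition connected_graph (T : finType) (e : rel T) : Prop :=
  0 < #|T| /\ forall x y : T, connect e x y.

Definition GS_ordering (T : finType) (e : rel T) (v1 : T) (rest : seq T) : Prop :=
  let s := v1 :: rest in
  [/\ uniq s, (forall x : T, x \in s) &
      forall i, 0 < i < size s -> has (e (nth v1 s i)) (take i s)].

Definition Ftree_parent (T : finType) (e : rel T) (v1 : T) (rest : seq T) (v : T) : T :=
  if v == v1 then v1 else nth v1 (v1 :: rest) (find (e v) (v1 :: rest)).

(* A rooted spanning tree of G, given by its root r and parent function p
   (p r = r, each non-root vertex is adjacent to its parent, and iterating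
   the parent map from any vertex reaches the root, i.e. no cycles). *)
Definition rooted_spanning_tree (T : finType) (e : rel T) (r : T) (p : T -> T) : Prop :=
  [/\ p r = r, (forall v, v != r -> e v (p v)) & (forall v, exists m, iter m p v = r)].

Definition leaves (T : finType) (r : T) (p : T -> T) : {set T} :=
  [set v | (v != r) && [forall u, (u != r) ==> (p u != v)]].

Definition connected_dominating (T : finType) (e : rel T) (D : {set T}) : Prop :=
  [/\ D != set0,
      (forall x y, x \in D -> y \in D ->
         connect [rel a b | [&& a \in D, b \in D & e a b]] x y) &
      (forall v, v \notin D -> exists2 u, u \in D & e v u)].

From mathcomp Require Import all_boot all_order all_algebra zify.
Set Implicit Arguments. Unset Strict Implicit. Unset Printing Implicit Defensive.

(* Every F-tree is a spanning tree, and the non-leaves of a spanning tree form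
   a connected dominating set.  Conversely, a connected dominating set D can be
   listed first in a GS ordering (grow it along its induced connectivity),
   followed by the vertices outside D; every non-root vertex has a neighbour in
   D, so its leftmost neighbour lies in D, and all vertices outside D are leaves
   of the F-tree. *)

Section GSOrderings.

Variables (T : finType) (e : rel T).

Definition gs_seq (v1 : T) (s : seq T) : Prop :=
  forall i, 0 < i < size (v1 :: s) ->
    has (e (nth v1 (v1 :: s) i)) (take i (v1 :: s)).

Lemma gs_seq_nil v1 : gs_seq v1 [::].
Proof. by case=> [|[]]. Qed.

Lemma gs_seq_rcons v1 s x :
  gs_seq v1 s -> has (e x) (v1 :: s) -> gs_seq v1 (rcons s x).
Proof.
move=> gs_s hx i; rewrite -rcons_cons size_rcons ltnS nth_rcons => /andP[i_gt0].
rewrite leq_eqVlt => /orP[/eqP->|lt_i]; first by rewrite ltnn eqxx -cats1 take_size_cat.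
by rewrite lt_i -cats1 takel_cat ?(ltnW lt_i) //; apply: gs_s; rewrite i_gt0.
Qed.

Lemma gs_seq_cat v1 s t :
  gs_seq v1 s -> all (fun x => has (e x) (v1 :: s)) t -> gs_seq v1 (s ++ t).
Proof.
move=> gs_s; elim/last_ind: t => [|t x IH]; first by rewrite cats0.
rewrite all_rcons -rcons_cat => /andP[hx /IH gs_st]; apply: gs_seq_rcons gs_st _.
by rewrite -cat_cons has_cat hx.
Qed.

Lemma Ftree_parent_earlier v1 rest v :
  GS_ordering e v1 rest -> v != v1 ->
  e v (Ftree_parent e v1 rest v) /\
  index (Ftree_parent e v1 rest v) (v1 :: rest) < index v (v1 :: rest).
Proof.
case=> uniq_s cover gs_s v_neq; rewrite /Ftree_parent (negbTE v_neq).
set s := v1 :: rest.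
have i_gt0 : 0 < index v s by rewrite /s /= eq_sym (negbTE v_neq).
have i_lt : index v s < size s by rewrite index_mem cover.
have := gs_s (index v s); rewrite i_gt0 i_lt nth_index // => /(_ isT) h_take.
have h_s : has (e v) s by rewrite -(cat_take_drop (index v s) s) has_cat h_take.
split; first exact: nth_find.
by rewrite index_uniq -?has_find // -has_take.
Qed.

Lemma Ftree_parent_prefix v1 s t v :
  has (e v) (v1 :: s) -> Ftree_parent e v1 (s ++ t) v \in v1 :: s.
Proof.
rewrite /Ftree_parent; case: eqP => [_ _|_ hv]; first exact: mem_head.
by rewrite -cat_cons find_cat hv nth_cat -has_find hv mem_nth // -has_find.
Qed.

Lemma Ftree_spanning v1 rest :
  GS_ordering e v1 rest -> rooted_spanning_tree e v1 (Ftree_parent e v1 rest).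
Proof.
move=> gs; split=> [|v v_neq|v]; first by rewrite /Ftree_parent eqxx.
  by case: (Ftree_parent_earlier gs v_neq).
have [n] := ubnP (index v (v1 :: rest)); elim: n v => // n IH v.
rewrite ltnS => le_n; have [->|v_neq] := eqVneq v v1; first by exists 0.
have [_ lt_idx] := Ftree_parent_earlier gs v_neq.
have [m hm] := IH _ (leq_trans lt_idx le_n).
by exists m.+1; rewrite iterSr.
Qed.

Lemma parent_notin_leaves r (p : T -> T) u : u != r -> p u \notin leaves r p.
Proof.
move=> u_neq; rewrite inE negb_and negbK; apply/orP; right.
by apply/forallP => /(_ u); rewrite u_neq eqxx.
Qed.

Lemma setC_subset_leaves r p (D : {set T}) :
  r \in D -> (forall u, u != r -> p u \in D) -> ~: D \subset leaves r p.
Proof.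
move=> rD pD; apply/subsetP => v; rewrite !inE => vD.
rewrite (contraNneq _ vD) => [|-> //]; apply/forallP => u.
by apply/implyP => /pD puD; apply: contraNneq vD => <-.
Qed.

Definition induced (D : {set T}) : rel T := [rel a b | [&& a \in D, b \in D & e a b]].

Hypothesis e_sym : symmetric e.

Lemma induced_sym D : symmetric (induced D).
Proof. by move=> a b; rewrite /induced /= e_sym andbCA. Qed.

Lemma spanning_tree_cds r p :
  rooted_spanning_tree e r p -> connected_dominating e (~: leaves r p).
Proof.
move=> [_ e_p reach]; set D := ~: leaves r p.
have rD : r \in D by rewrite !inE eqxx.
have pD u : u != r -> p u \in D by move=> u_neq; rewrite inE parent_notin_leaves.
have to_root x : x \in D -> connect (induced D) x r.
  have [m] := reach x; elim: m x => [|m IH] x hm xD; first by rewrite -hm connect0.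
  have [->|x_neq] := eqVneq x r; first exact: connect0.
  apply: connect_trans (IH (p x) _ (pD _ x_neq)); last by rewrite -iterSr.
  by apply: connect1; rewrite /induced /= xD pD // e_p.
split.
- by apply/set0Pn; exists r.
- move=> x y xD yD; apply: connect_trans (to_root _ xD) _.
  by rewrite (sym_connect_sym (induced_sym D)); apply: to_root.
- move=> v; rewrite inE negbK => vL.
  have v_neq : v != r by move: vL; rewrite inE => /andP[].
  by exists (p v); [apply: pD | apply: e_p].
Qed.

Section InducedConnected.

Variable D : {set T}.
Hypothesis D_conn : forall x y, x \in D -> y \in D -> connect (induced D) x y.

Lemma induced_frontier (s : seq T) r z :
  r \in s -> {subset s <= D} -> z \in D -> z \notin s ->
  exists x, [/\ x \in D, x \notin s & has (e x) s].
Proof.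
move=> rs sD zD zs.
have [/existsP[x /and3P[]]|/existsPn no_x] :=
  boolP [exists x, [&& x \in D, x \notin s & has (e x) s]]; first by exists x.
have s_closed : closed (induced D) (mem s).
  have in_s y w : y \in D -> w \in s -> e y w -> y \in s.
    move=> yD ws eyw; apply: contraT => ys.
    by move: (no_x y); rewrite yD ys => /hasPn/(_ _ ws); rewrite eyw.
  move=> a b /and3P[aD bD eab]; apply/idP/idP => [as_|bs].
  - by apply: in_s as_ _; rewrite // e_sym.
  - exact: in_s bs eab.
by move: zs; rewrite -(closed_connect s_closed (D_conn (sD r rs) zD)) rs.
Qed.

Lemma induced_gs_enum r :
  r \in D -> exists s, [/\ uniq (r :: s), gs_seq r s & r :: s =i D].
Proof.
move=> rD.
suff grow s : uniq (r :: s) -> gs_seq r s -> {subset r :: s <= D} ->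
    exists s', [/\ uniq (r :: s'), gs_seq r s' & r :: s' =i D].
  by apply: (grow [::]); [|exact: gs_seq_nil|move=> x; rewrite inE => /eqP->].
have [n] := ubnP (#|D| - size (r :: s)); elim: n s => // n IH s.
rewrite ltnS => le_n uniq_s gs_s sD.
have [/subsetP cover|/subsetPn[z zD zs]] := boolP (D \subset r :: s).
  by exists s; split=> // x; apply/idP/idP => [/sD|/cover].
have [x [xD xs hx]] := induced_frontier (mem_head r s) sD zD zs.
have uniq_xs : uniq (rcons (r :: s) x) by rewrite rcons_uniq xs.
have : size (rcons (r :: s) x) <= #|D|.
  by rewrite cardE uniq_leq_size // => y; rewrite mem_rcons inE mem_enum => /orP[/eqP->|/sD].
rewrite size_rcons => lt_D; apply: (IH (rcons s x)).
- by rewrite -rcons_cons size_rcons; lia.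
- by rewrite -rcons_cons.
- exact: gs_seq_rcons.
- by move=> y; rewrite -rcons_cons mem_rcons inE => /orP[/eqP->|/sD].
Qed.

End InducedConnected.

Lemma cds_neighbour D r u :
  connected_dominating e D -> r \in D -> u != r -> exists2 y, y \in D & e u y.
Proof.
case=> _ D_conn dom rD u_neq; have [uD|] := boolP (u \in D); last exact: dom.
have /connectP[[|y q] /= path_q last_q] := D_conn u r uD rD.
  by move: u_neq; rewrite last_q eqxx.
by case/andP: path_q => /and3P[_ yD euy] _; exists y.
Qed.

Lemma cds_GS_ordering D :
  connected_dominating e D ->
  exists v1 rest, GS_ordering e v1 rest /\ ~: D \subset leaves v1 (Ftree_parent e v1 rest).
Proof.
move=> cds; case: (cds) => /set0Pn[r rD] D_conn _.
have [s [uniq_s gs_s eq_s]] := induced_gs_enum D_conn rD.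
have nbr u : u != r -> has (e u) (r :: s).
  by move=> /(cds_neighbour cds rD)[y yD euy]; apply/hasP; exists y; rewrite ?eq_s.
exists r, (s ++ enum (~: D)); split.
  split.
  - rewrite -cat_cons cat_uniq uniq_s enum_uniq andbT.
    by apply/hasPn => y; rewrite mem_enum inE /= eq_s.
  - by move=> x; rewrite -cat_cons mem_cat eq_s mem_enum inE orbN.
  - apply: gs_seq_cat gs_s _; apply/allP => u; rewrite mem_enum inE => uD.
    by apply: nbr; apply: contraNneq uD => ->.
apply: setC_subset_leaves rD _ => u /nbr hu.
by rewrite -eq_s; apply: Ftree_parent_prefix.
Qed.

End GSOrderings.

Import Order.TTheory GRing.Theory Num.Theory.
Local Open Scope ring_scope.

Theorem corollary3p6 (T : finType) (e : rel T) (k : int) :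
  simple_graph e -> connected_graph e ->
  ((exists (v1 : T) (rest : seq T),
      GS_ordering e v1 rest /\ k <= (#|leaves v1 (Ftree_parent e v1 rest)|)%:Z)
   <-> (exists (r : T) (p : T -> T),
      rooted_spanning_tree e r p /\ k <= (#|leaves r p|)%:Z))
  /\
  ((exists (r : T) (p : T -> T),
      rooted_spanning_tree e r p /\ k <= (#|leaves r p|)%:Z)
   <-> (exists D : {set T},
      connected_dominating e D /\ (#|D|)%:Z <= (#|T|)%:Z - k)).
Proof.
move=> [e_sym _] _; split; split.
- case=> v1 [rest [gs le_k]]; exists v1, (Ftree_parent e v1 rest).
  by split=> //; apply: Ftree_spanning.
- case=> r [p [tree le_k]].
  have [v1 [rest [gs sub]]] := cds_GS_ordering e_sym (spanning_tree_cds e_sym tree).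
  exists v1, rest; split=> //; move: (subset_leq_card sub); rewrite setCK; lia.
- case=> r [p [tree le_k]]; exists (~: leaves r p).
  by split; [apply: spanning_tree_cds | have := cardsC (leaves r p); lia].
- case=> D [cds le_D]; have [v1 [rest [gs sub]]] := cds_GS_ordering e_sym cds.
  exists v1, (Ftree_parent e v1 rest); split; first exact: Ftree_spanning.
  by have := subset_leq_card sub; have := cardsC D; lia.
Qed.
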